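(* Let $G$ be a countable infinite discrete group, $X$ an infinite compact Hausdorff space and $\beta: G\curvearrowright X$ a minimal, topologically free continuous action with no $G$-invariant regular Borel probability measure and with dynamical comparison. Let $Y$ be a compact Hausdorff space and $\alpha: G\curvearrowright X\times Y$ the action $\alpha_g(x,y)=(\beta_g(x),y)$. Then $\alpha$ has paradoxical comparison.
   Context: Subequivalence for an action of $G$ on a space $Z$: for closed $F$ and open $O$ in $Z$, $F\prec O$ if there exist a finite open cover $\mathcal{U}$ of $F$ and $s_U\in G$ with the sets $s_UU$ pairwise disjoint subsets of $O$; for open $V$, $V\prec O$ means $F\prec O$ for all closed $F\subset V$. Dynamical comparison (for $\beta$): $V\prec O$ for every open $V$ and nonempty open $O$ in $X$ with $\mu(V)<\mu(O)$ for all $G$-invariant regular Borel probability measures $\mu$. Topologically free: fixed point sets of non-identity elements have empty interior. Paradoxical comparison (for $\alpha$): for every nonempty open $O\subset X\times Y$ and closed $F\subset O$ there are disjoint nonempty open $O_1,O_2\subset O$ with $F\prec O_1$, $F\prec O_2$. *)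

From HB Require Import structures.
From mathcomp Require Import all_boot all_order all_algebra.
From mathcomp Require Import all_classical all_reals all_analysis.
From mathcomp Require Import Rstruct Rstruct_topology.

Set Implicit Arguments.
Unset Strict Implicit.
Unset Printing Implicit Defensive.

Import Order.TTheory GRing.Theory Num.Theory.
Local Open Scope classical_set_scope.
Local Open Scope ring_scope.

Local Notation R := Rdefinitions.R.

Definition is_action (G : groupType) (Z : Type) (act : G -> Z -> Z) : Prop :=
  (forall z, act 1%g z = z) /\
  (forall g h z, act (g * h)%g z = act g (act h z)).

Definition continuous_action (G : groupType) (Z : topologicalType)
  (act : G -> Z -> Z) : Prop :=
  is_action act /\ forall g, continuous (act g).

Definition orbit (G : groupType) (Z : Type) (act : G -> Z -> Z) (z : Z) : set Z :=
  [set act g z | g in [set: G]].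

Definition minimal_action (G : groupType) (Z : topologicalType)
  (act : G -> Z -> Z) : Prop :=
  forall z : Z, closure (orbit act z) = [set: Z].

Definition topologically_free (G : groupType) (Z : topologicalType)
  (act : G -> Z -> Z) : Prop :=
  forall g : G, g <> 1%g -> interior [set z | act g z = z] = set0.

Definition borel_set (Z : topologicalType) (A : set Z) : Prop :=
  <<s [set U : set Z | open U] >> A.

(** [mu] is a regular Borel probability measure on [Z] (its values on
    non-Borel sets are irrelevant). *)
Definition regular_borel_probability (Z : topologicalType) (mu : set Z -> R)
  : Prop :=
  [/\ (forall A, borel_set A -> 0 <= mu A),
      mu [set: Z] = 1,
      (forall F : nat -> set Z, (forall n, borel_set (F n)) ->
          trivIset [set: nat] F ->
          (fun n => \sum_(i < n) mu (F i)) @ \oo --> mu (\bigcup_n F n)),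
      (forall A, borel_set A -> forall e : R, 0 < e ->
          exists U, [/\ open U, A `<=` U & mu U < mu A + e]) &
      (forall A, borel_set A -> forall e : R, 0 < e ->
          exists K, [/\ compact K, K `<=` A & mu A - e < mu K])].

Definition invariant_measure (G : groupType) (Z : topologicalType)
  (act : G -> Z -> Z) (mu : set Z -> R) : Prop :=
  forall g A, borel_set A -> mu (act g @^-1` A) = mu A.

Definition invariant_regular_borel_probability (G : groupType)
  (Z : topologicalType) (act : G -> Z -> Z) (mu : set Z -> R) : Prop :=
  regular_borel_probability mu /\ invariant_measure act mu.

Definition subeq_closed (G : groupType) (Z : topologicalType)
  (act : G -> Z -> Z) (F O : set Z) : Prop :=
  exists (n : nat) (U : 'I_n -> set Z) (s : 'I_n -> G),
    [/\ (forall i, open (U i)),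
        F `<=` \bigcup_(i in [set: 'I_n]) U i,
        (forall i, act (s i) @` U i `<=` O) &
        (forall i j, i <> j -> act (s i) @` U i `&` act (s j) @` U j = set0)].

Definition subeq_open (G : groupType) (Z : topologicalType)
  (act : G -> Z -> Z) (V O : set Z) : Prop :=
  forall F, closed F -> F `<=` V -> subeq_closed act F O.

Definition dynamical_comparison (G : groupType) (Z : topologicalType)
  (act : G -> Z -> Z) : Prop :=
  forall V O : set Z, open V -> open O -> O !=set0 ->
    (forall mu, invariant_regular_borel_probability act mu -> mu V < mu O) ->
    subeq_open act V O.

Definition paradoxical_comparison (G : groupType) (Z : topologicalType)
  (act : G -> Z -> Z) : Prop :=
  forall O F : set Z, open O -> O !=set0 -> closed F -> F `<=` O ->
    exists O1 O2 : set Z,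
      [/\ open O1 /\ open O2, O1 !=set0 /\ O2 !=set0,
          O1 `<=` O /\ O2 `<=` O, O1 `&` O2 = set0 &
          subeq_closed act F O1 /\ subeq_closed act F O2].

Definition prod_action (G : groupType) (X Y : Type) (beta : G -> X -> X)
  : G -> X * Y -> X * Y :=
  fun g p => (beta g p.1, p.2).

From HB Require Import structures.
From mathcomp Require Import all_boot all_order all_algebra.
From mathcomp Require Import all_classical all_reals all_analysis.
From mathcomp Require Import Rstruct Rstruct_topology finmap.

(** Without invariant probability measures the measure-theoretic hypothesis
    of dynamical comparison is vacuous, so [X ≺ W] for every nonempty open
    [W ⊆ X].  In particular [X] has no isolated point: [X ≺ {x}] would make
    the infinite space [X] a subsingleton.  Cover the compact set [F] by
    finitely many boxes [A_j × B_j ⊆ O]; as [X] is perfect and Hausdorff, the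
    [A_j] contain nonempty open sets [C_j] and [C'_j], all of them pairwise
    disjoint.  Since [α] does not move the second coordinate,
    [X × B_j ≺ C_j × B_j], and these pieces glue to [F ≺ ⋃_j C_j × B_j], and
    likewise [F ≺ ⋃_j C'_j × B_j]. *)

Set Implicit Arguments.
Unset Strict Implicit.
Unset Printing Implicit Defensive.
Local Open Scope classical_set_scope.

Section Subequivalence.
Variables (G : groupType) (Z : topologicalType) (act : G -> Z -> Z).

Lemma subeq_closedS F F' O O' : F' `<=` F -> O `<=` O' ->
  subeq_closed act F O -> subeq_closed act F' O'.
Proof.
move=> F'F OO' [n [U [s [oU FU UO Ud]]]].
by exists n, U, s; split => // [z /F'F/FU | i z /UO/OO'].
Qed.

Lemma subeq_closed_fin (I : finType) (U : I -> set Z) (s : I -> G) F O :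
  (forall i, open (U i)) -> F `<=` \bigcup_i U i ->
  (forall i, act (s i) @` U i `<=` O) ->
  (forall i j, i <> j -> act (s i) @` U i `&` act (s j) @` U j = set0) ->
  subeq_closed act F O.
Proof.
move=> oU FU UO Ud; exists #|I|, (U \o enum_val), (s \o enum_val).
split=> [i | z /FU [i _ Uiz] | i | i j ij] //=.
- by exists (enum_rank i); rewrite //= enum_rankK.
- by apply: Ud => /enum_val_inj.
Qed.

Lemma subeq_closed_bigcup (I : finType) (F O : I -> set Z) :
  (forall i, subeq_closed act (F i) (O i)) ->
  (forall i j, i <> j -> O i `&` O j = set0) ->
  subeq_closed act (\bigcup_i F i) (\bigcup_i O i).
Proof.
move=> FO Od.
have /choice[w wP] : forall i,
    exists w : {n : nat & ('I_n -> set Z) * ('I_n -> G)},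
    [/\ (forall k, open ((tagged w).1 k)), F i `<=` \bigcup_k (tagged w).1 k,
        (forall k, act ((tagged w).2 k) @` (tagged w).1 k `<=` O i) &
        (forall k l, k <> l -> act ((tagged w).2 k) @` (tagged w).1 k `&`
                               act ((tagged w).2 l) @` (tagged w).1 l = set0)].
  by move=> i; have [n [U [s UsP]]] := FO i; exists (existT _ n (U, s)).
pose U (k : {i : I & 'I_(tag (w i))}) := (tagged (w (tag k))).1 (tagged k).
pose s (k : {i : I & 'I_(tag (w i))}) := (tagged (w (tag k))).2 (tagged k).
apply: (@subeq_closed_fin _ U s).
- by case=> i k; have [oU _ _ _] := wP i; apply: oU.
- move=> z [i _]; have [_ FU _ _] := wP i.
  by move=> /FU [k _ Ukz]; exists (existT _ i k).
- by case=> i k z Uz; exists i => //; have [_ _ UO _] := wP i; apply: UO Uz.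
- case=> i k [j l] ikjl; have [eij | ij] := eqVneq i j; first subst j.
  + have [_ _ _ Ud] := wP i; by apply: Ud => /= kl; apply: ikjl; rewrite kl.
  + apply/disjoints_subset => z Uz Vz.
    have [_ _ UO _] := wP i; have [_ _ VO _] := wP j.
    have : (O i `&` O j) z by split; [apply: UO Uz | apply: VO Vz].
    by rewrite Od // => /eqP; rewrite (negbTE ij).
Qed.

Lemma act_inj g : is_action act -> injective (act g).
Proof.
move=> [act1 actM] z1 z2 e.
have actK z : act g^-1 (act g z) = z by rewrite -actM mulVg act1.
by rewrite -(actK z1) e actK.
Qed.

Lemma subeq_closed_set1 F x : is_action act -> subeq_closed act F [set x] ->
  forall z1 z2, F z1 -> F z2 -> z1 = z2.
Proof.
move=> actP [n [U [s [_ FU UO Ud]]]] z1 z2 /FU [i _ Uz1] /FU [k _ Uz2].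
have sz1 : act (s i) z1 = x by apply: (UO i); exists z1.
have sz2 : act (s k) z2 = x by apply: (UO k); exists z2.
have [ik | ik] := eqVneq i k.
  by subst k; apply: (act_inj (g := s i) actP); rewrite sz1 sz2.
suff : (act (s i) @` U i `&` act (s k) @` U k) x.
  by rewrite Ud // => /eqP; rewrite (negbTE ik).
by split; [exists z1 | exists z2].
Qed.

End Subequivalence.

Lemma open_setX (X Y : topologicalType) (A : set X) (B : set Y) :
  open A -> open B -> open (A `*` B).
Proof.
move=> oA oB; rewrite openE => -[x y] [/= Ax By].
by exists (A, B) => //=; split; apply: open_nbhs_nbhs.
Qed.

Section ProductAction.
Variables (G : groupType) (X Y : topologicalType) (beta : G -> X -> X).

Lemma subeq_closed_setX (A C : set X) (B : set Y) : open B ->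
  subeq_closed beta A C -> subeq_closed (prod_action beta) (A `*` B) (C `*` B).
Proof.
move=> oB [n [U [s [oU AU UC Ud]]]].
exists n, (fun i => U i `*` B), s; split.
- by move=> i; apply: open_setX.
- by move=> [x y] [/AU [i _ Ux] By]; exists i.
- by move=> i _ [[x y] [Ux By] <-]; split => //=; apply: (UC i); exists x.
- move=> i j ij; apply/disjoints_subset => _ [[x y] [Ux _] <-].
  move=> [[x' y'] [Ux' _] e].
  have : (beta (s i) @` U i `&` beta (s j) @` U j) (beta (s i) x).
    by split; [exists x | exists x'; case: e].
  by rewrite Ud.
Qed.

Lemma subeq_closed_bigcup_setX (I : finType) (C : I -> set X) (B : I -> set Y) :
  (forall i, open (B i)) -> (forall i, subeq_closed beta [set: X] (C i)) ->
  (forall i j, i <> j -> C i `&` C j = set0) ->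
  subeq_closed (prod_action beta) (\bigcup_i ([set: X] `*` B i))
                                  (\bigcup_i (C i `*` B i)).
Proof.
move=> oB XC Cd; apply: subeq_closed_bigcup => [i | i j ij].
  exact: subeq_closed_setX.
apply/disjoints_subset => z [Ciz _] [Cjz _].
by have : (C i `&` C j) z.1 by []; rewrite Cd.
Qed.

End ProductAction.

Section NoInvariantMeasure.
Variables (G : groupType) (X : topologicalType) (beta : G -> X -> X).
Hypotheses (no_mu : ~ exists mu, invariant_regular_borel_probability beta mu)
  (cmp : dynamical_comparison beta).

Lemma subeq_closed_setT_open W : open W -> W !=set0 ->
  subeq_closed beta [set: X] W.
Proof.
move=> oW W0; apply: (cmp openT oW W0) closedT _ => // mu muP.
by case: no_mu; exists mu.
Qed.

Lemma perfect_setT_of_comparison : is_action beta -> infinite_set [set: X] ->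
  perfect_set [set: X].
Proof.
move=> actP infX; apply/perfectTP => x ox; apply: infX.
apply: (sub_finite_set _ (finite_set1 x)) => z _.
apply: (subeq_closed_set1 actP (subeq_closed_setT_open ox _)) => //.
by exists x.
Qed.

End NoInvariantMeasure.

Section PerfectHausdorff.
Variable X : topologicalType.
Hypotheses (hX : hausdorff_space X) (pX : perfect_set [set: X]).

Lemma open_separated_point (A : set X) x : open A -> A !=set0 ->
  exists P Q, [/\ open P, open Q, P x, A `&` Q !=set0 & P `&` Q = set0].
Proof.
move=> oA A0; have [y [z [Ay Az yz]]] := iffLR perfectTP_ex pX A oA A0.
have [w Aw xw] : exists2 w, A w & x != w.
  by have [xy | xy] := eqVneq x y; [exists z; rewrite // xy | exists y].
move: hX; rewrite open_hausdorff => /(_ x w xw) [[P Q] /= [Px Qw]].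
move=> [oP oQ /eqP PQ]; rewrite !in_setE in Px Qw.
by exists P, Q; split => //; exists w.
Qed.

Lemma open_disjoint_refinement_seq (J : choiceType) (s : seq J)
    (A : J -> set X) :
  (forall j, open (A j)) -> (forall j, A j !=set0) ->
  exists C : J -> set X,
    [/\ {in s, forall j, open (C j)}, {in s, forall j, C j !=set0},
        {in s, forall j, C j `<=` A j} &
        {in s &, forall i j, i != j -> C i `&` C j = set0}].
Proof.
elim: s A => [|j0 s IH] A oA A0; first by exists A.
have [x Ax] := A0 j0.
(* Separate [x] from every [A j]: [C j0] lies in all the [(PQ j).1], and the
   other [C j] are found inside the [(PQ j).2] by induction. *)
have /choice[PQ PQP] : forall j, exists PQ : set X * set X,
    [/\ open PQ.1, open PQ.2, PQ.1 x, A j `&` PQ.2 !=set0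
      & PQ.1 `&` PQ.2 = set0].
  move=> j; have [P [Q PQj]] := open_separated_point x (oA j) (A0 j).
  by exists (P, Q).
have [j | j | C [oC C0 CA Cd]] := IH (fun j => A j `&` (PQ j).2).
- by have [_ oQ _ _ _] := PQP j; apply: openI.
- by have [] := PQP j.
pose D := A j0 `&` \bigcap_(j in [set` s]) (PQ j).1.
have oD : open D.
  apply: openI (oA j0) _; rewrite bigcap_seq.
  apply: big_ind => [|U V|j _]; [exact: openT | exact: openI |].
  by case: (PQP j).
have DC : {in s, forall j, D `&` C j = set0}.
  move=> j js; apply/disjoints_subset => z [_ Pz] /(CA j js) [_ Qz].
  have [_ _ _ _ PQ0] := PQP j.
  have : ((PQ j).1 `&` (PQ j).2) z by split => //; apply: Pz.
  by rewrite PQ0.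
exists (fun j => if j == j0 then D else C j); split.
- move=> j; rewrite inE; have [_ _ | _ /= js] := eqVneq j j0; first exact: oD.
  exact: oC.
- move=> j; rewrite inE; have [_ _ | _ /= js] := eqVneq j j0; last exact: C0.
  by exists x; split => // k _; case: (PQP k).
- move=> j; rewrite inE; have [-> _ z [] // | _ /= js] := eqVneq j j0.
  by move=> z /(CA j js) [].
- move=> i j; rewrite !inE.
  have [-> | _] := eqVneq i j0; have [-> | _] := eqVneq j j0 => //= si sj ij.
  + exact: DC.
  + by rewrite setIC; apply: DC.
  + exact: Cd.
Qed.

Lemma open_disjoint_refinement (J : finType) (A : J -> set X) :
  (forall j, open (A j)) -> (forall j, A j !=set0) ->
  exists C : J -> set X,
    [/\ forall j, open (C j), forall j, C j !=set0, forall j, C j `<=` A j &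
        forall i j, i != j -> C i `&` C j = set0].
Proof.
move=> oA A0.
have [C [oC C0 CA Cd]] := open_disjoint_refinement_seq (enum J) oA A0.
by exists C; split=> [j | j | j | i j];
  [apply: oC | apply: C0 | apply: CA | apply: Cd]; rewrite mem_enum.
Qed.

End PerfectHausdorff.

(* [compact_cover] is stated for pointed spaces only. *)
Definition pointed_at (T : topologicalType) (t : T) : Type := T.
HB.instance Definition _ (T : topologicalType) (t : T) :=
  Topological.copy (@pointed_at T t) T.
HB.instance Definition _ (T : topologicalType) (t : T) :=
  isPointed.Build (@pointed_at T t) t.

Lemma cover_compact_at (T : topologicalType) (t : T) (K : set T) :
  compact K -> cover_compact K.
Proof.
move=> cK; have cKt : @compact (@pointed_at T t) K := cK.
by rewrite compact_cover in cKt.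
Qed.

Lemma compact_box_cover (X Y : topologicalType) (F O : set (X * Y)) :
  compact F -> open O -> O !=set0 -> F `<=` O ->
  exists (J : finType) (j0 : J) (A : J -> set X) (B : J -> set Y),
    [/\ forall j, open (A j) /\ open (B j), forall j, A j !=set0 /\ B j !=set0,
        forall j, A j `*` B j `<=` O & F `<=` \bigcup_j (A j `*` B j)].
Proof.
move=> cF oO [p0 Op0] FO.
have /choice[box boxP] : forall p, exists AB : set X * set Y, O p ->
    [/\ open AB.1, open AB.2, AB.1 p.1, AB.2 p.2 & AB.1 `*` AB.2 `<=` O].
  move=> p; have [Op | nOp] := pselect (O p); last by exists (setT, setT).
  move: oO; rewrite openE => /(_ p Op) [[P Q] /= [Pp Qp] PQO].
  exists (P°, Q°) => _; split => //; try exact: open_interior.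
  by move=> z [/interior_subset Pz /interior_subset Qz]; apply: PQO.
have := cover_compact_at p0 cF (D := O) (f := fun p => (box p).1 `*` (box p).2).
case=> [p Op | z /FO Oz | D DO FD].
- by have [oP oQ _ _ _] := boxP p Op; apply: open_setX.
- by have [_ _ Pz Qz _] := boxP z Oz; exists z.
have sO (j : seq_sub (p0 :: D)) : O (ssval j).
  by case: j => p /= /predU1P [-> | /DO]; rewrite ?in_setE.
exists (seq_sub (p0 :: D)), (SeqSub (mem_head p0 D)).
exists (fun j => (box (ssval j)).1), (fun j => (box (ssval j)).2).
split=> [j | j | j | z /FD [p Dp PQz]].
- by have [oP oQ _ _ _] := boxP _ (sO j).
- have [_ _ Pp Qp _] := boxP _ (sO j).
  by split; [exists (ssval j).1 | exists (ssval j).2].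
- by have [_ _ _ _ PQO] := boxP _ (sO j).
- by exists (SeqSub (mem_behead (s := p0 :: D) Dp)).
Qed.

Unset Implicit Arguments.

Theorem proposition5p2 (G : groupType) (X Y : topologicalType)
  (beta : G -> X -> X) :
  countable [set: G] -> infinite_set [set: G] ->
  hausdorff_space X -> compact [set: X] -> infinite_set [set: X] ->
  continuous_action beta ->
  minimal_action beta ->
  topologically_free beta ->
  ~ (exists mu, invariant_regular_borel_probability beta mu) ->
  dynamical_comparison beta ->
  hausdorff_space Y -> compact [set: Y] ->
  paradoxical_comparison (Z := (X * Y)%type) (@prod_action G X Y beta).
Proof.
move=> _ _ hX cX infX [actP _] _ _ no_mu cmp _ cY O F oO O0 cF FO.
have cF' : compact F :=
  subclosed_compact cF (compact_setX cX cY) (fun _ _ => conj I I).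
have [J [j0 [A [B [oAB AB0 ABO FAB]]]]] := compact_box_cover cF' oO O0 FO.
have pX := perfect_setT_of_comparison no_mu cmp actP infX.
have [C [oC C0 CA Cd]] := open_disjoint_refinement hX pX
  (A := fun k : bool * J => A k.2)
  (fun k => (oAB k.2).1) (fun k => (AB0 k.2).1).
pose Ob b := \bigcup_j (C (b, j) `*` B j).
have oOb b : open (Ob b).
  by apply: bigcup_open => j _; apply: open_setX; [apply: oC | case: (oAB j)].
have Ob0 b : Ob b !=set0.
  have [[x Cx] [_ [y By]]] := (C0 (b, j0), AB0 j0); by exists (x, y), j0.
have ObO b : Ob b `<=` O.
  by move=> z [j _ [Cz Bz]]; apply: (ABO j); split => //; apply: CA Cz.
have FOb b : subeq_closed (prod_action beta) F (Ob b).
  have XC j : subeq_closed beta [set: X] (C (b, j)).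
    exact: subeq_closed_setT_open no_mu cmp _ (oC _) (C0 _).
  apply: subeq_closedS (subeq_closed_bigcup_setX (fun j => (oAB j).2) XC _).
  - by move=> z /FAB [j _ [_ Bz]]; exists j.
  - by [].
  - by move=> i j ij; apply: Cd; apply/eqP => -[].
exists (Ob true), (Ob false); split=> //.
apply/disjoints_subset => z [i _ [Ciz _]] [j _ [Cjz _]].
by have : (C (true, i) `&` C (false, j)) z.1 by []; rewrite Cd.
Qed.
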